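(* Let $u$ be an endomorphism of a vector space $V$ of countably infinite dimension over a field $\mathbb{F}$. Assume that $u$ has no dominant eigenvalue and that $(u-\lambda\,\mathrm{id}_V)^2=0$ for some $\lambda\in\mathbb{F}$. Then $V^u$ has a good stratification.
   Context: A scalar $\mu$ is a dominant eigenvalue of $u$ if $\operatorname{rk}(u-\mu\,\mathrm{id}_V)<\dim V$. $V^u$ is the $\mathbb{F}[t]$-module with underlying space $V$ and $t\cdot x:=u(x)$. A stratification of a non-zero $\mathbb{F}[t]$-module $M$ is an increasing family $(M_\alpha)_{\alpha\in D}$ of submodules indexed by a well-ordered set $D$ such that each quotient $M_\alpha/\sum_{\beta<\alpha}M_\beta$ is non-zero and monogenous (cyclic), and $M=\sum_{\alpha\in D}M_\alpha$; its dimension sequence is $n_\alpha:=\dim_{\mathbb{F}}(M_\alpha/\sum_{\beta<\alpha}M_\beta)\in\mathbb{N}^*\cup\{+\infty\}$. It is good if (a) $n_\alpha\ge 2$ whenever $\alpha$ is the minimum of $D$ or the successor of some element of $D$, and (b) $D$ has no maximum. *)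

From HB Require Import structures.
From mathcomp Require Import all_boot all_order all_algebra.
Set Implicit Arguments. Unset Strict Implicit. Unset Printing Implicit Defensive.
Import GRing.Theory.
Local Open Scope ring_scope.

Section Defs.
Variables (F : fieldType) (V : lmodType F).

Definition subspace (W : V -> Prop) : Prop :=
  [/\ W 0, (forall x y, W x -> W y -> W (x + y)) & (forall (a : F) x, W x -> W (a *: x))].

Definition span (S : V -> Prop) : V -> Prop :=
  fun v => forall W, subspace W -> (forall x, S x -> W x) -> W v.

Definition lin_indep (e : nat -> V) : Prop :=
  forall (n : nat) (c : nat -> F),
    \sum_(i < n) c i *: e i = 0 -> forall i, (i < n)%N -> c i = 0.

Definition countably_infinite_dim : Prop :=
  exists e : nat -> V, lin_indep e /\ forall v, span (fun x => exists i, x = e i) v.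

Variable u : V -> V.

Definition shift (mu : F) (x : V) : V := u x - mu *: x.

(** mu is a dominant eigenvalue: rk(u - mu id) < dim V = aleph_0, i.e. the
    image of u - mu id is finite-dimensional (contained in the span of a
    finite list of vectors). *)
Definition dominant_eigenvalue (mu : F) : Prop :=
  exists s : seq V, forall x, span (fun y => y \in s) (shift mu x).

(** Submodules of V^u: u-stable subspaces. *)
Definition submodule (W : V -> Prop) : Prop :=
  subspace W /\ (forall x, W x -> W (u x)).

Definition gen_submodule (S : V -> Prop) : V -> Prop :=
  fun v => forall W, submodule W -> (forall x, S x -> W x) -> W v.

Definition well_order (D : Type) (lt : D -> D -> Prop) : Prop :=
  [/\ (forall a, ~ lt a a),
      (forall a b c, lt a b -> lt b c -> lt a c),
      (forall a b, a = b \/ lt a b \/ lt b a)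
    & well_founded lt].

Section Strat.
Variables (D : Type) (lt : D -> D -> Prop) (M : D -> V -> Prop).

Definition below_sum (a : D) : V -> Prop :=
  span (fun x => exists b, lt b a /\ M b x).

Definition stratification : Prop :=
  [/\ well_order lt,
      (forall a, submodule (M a)),
      (forall a b, lt a b -> forall x, M a x -> M b x),
      ((* each quotient M_a / sum_{b<a} M_b is non-zero ... *)
      (forall a, exists x, M a x /\ ~ below_sum a x)) /\
      (* ... and monogenous: M_a = F[t] x + sum_{b<a} M_b *)
      (forall a, exists x, M a x /\
         forall v, M a v <-> gen_submodule (fun y => y = x \/ below_sum a y) v)
    &
      (forall v, span (fun x => exists a, M a x) v)].

(** n_a >= 2: the quotient M_a / sum_{b<a} M_b contains two linearly
    independent vectors. *)
Definition quot_dim_ge2 (a : D) : Prop :=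
  exists x y, [/\ M a x, M a y &
    forall c d : F, below_sum a (c *: x + d *: y) -> c = 0 /\ d = 0].

Definition is_minimum (a : D) : Prop := forall b, ~ lt b a.
Definition is_successor (a : D) : Prop :=
  exists b, lt b a /\ forall c, ~ (lt b c /\ lt c a).

Definition good_stratification : Prop :=
  [/\ stratification,
      (forall a, is_minimum a \/ is_successor a -> quot_dim_ge2 a)
    & (forall a, exists b, lt a b)].
End Strat.

Definition has_good_stratification : Prop :=
  exists (D : Type) (lt : D -> D -> Prop) (M : D -> V -> Prop),
    good_stratification lt M.

End Defs.

From Pilot Require Import Defs.
From HB Require Import structures.
From mathcomp Require Import all_boot all_order all_algebra zify.
From Stdlib Require Import ClassicalEpsilon Cantor Wellfounded Lexicographic_Product.
Import Order.TTheory GRing.Theory.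
Set Implicit Arguments. Unset Strict Implicit. Unset Printing Implicit Defensive.
Local Open Scope ring_scope.

(* Put a := u - lambda, so that a^2 = 0 and the F[t]-submodules of V are the
   a-stable subspaces; the cyclic submodule generated by y is spanned by y and a y.
   As lambda is not dominant, Im a lies in no finite-dimensional subspace, so each
   finite-dimensional submodule W misses some a y, and then y, a y are independent
   modulo W.  Index the strata by w.w, i.e. pairs ordered lexicographically, and
   enumerate these positions by Cantor pairing.  Greedily pick generators g_n, each
   independent of the submodule W_n generated by its predecessors in the enumeration;
   at a limit position (k+1, 0) pick g_n instead so that the k-th basis vector lies in
   W_n + F[t] g_n, which may force a g_n = 0: a one-dimensional quotient, allowed at
   limits.  The invariant W_n /\ Im a = a W_n keeps this possible.  Since the blocks
   F[t] g_n form a direct sum, the independence of g_n and a g_n survives when W_n is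
   replaced by the sum of the strata at lexicographically smaller positions, which is
   what the quotients of the stratification see. *)

Lemma chain_mono (T : Type) (W : nat -> T -> Prop) :
  (forall n v, W n v -> W n.+1 v) -> forall m n v, (m <= n)%N -> W m v -> W n v.
Proof.
move=> WS m n v le_mn; apply: (homo_leq (r := fun A B => forall v, A v -> B v)) le_mn v => //.
by move=> B A C AB BC x /AB /BC.
Qed.

Section Spans.
Variables (F : fieldType) (V : lmodType F).

Definition finite_dim (W : V -> Prop) : Prop :=
  exists s : seq V, forall v, W v -> Defs.span (fun y => y \in s) v.

Lemma subspace_span (S : V -> Prop) : subspace (Defs.span S).
Proof.
split.
- by move=> W [W0 _ _].
- by move=> x y Sx Sy W HW SW; case: (HW) => _ WD _; apply: WD; [exact: Sx | exact: Sy].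
- by move=> c x Sx W HW SW; case: (HW) => _ _ WZ; apply: WZ; exact: Sx.
Qed.

Lemma sub_span (S : V -> Prop) x : S x -> Defs.span S x.
Proof. by move=> Sx W _; apply. Qed.

Lemma subspaceB (W : V -> Prop) x y : subspace W -> W x -> W y -> W (x - y).
Proof. by move=> [_ WD WZ] Wx Wy; rewrite -scaleN1r; apply: WD => //; apply: WZ. Qed.

Lemma subspaceZ_eq0 (W : V -> Prop) (c : F) x : subspace W -> W (c *: x) -> ~ W x -> c = 0.
Proof.
move=> [_ _ WZ] Wcx Wx; case: (eqVneq c 0) => // c_neq0; case: Wx.
by rewrite -[x]scale1r -(mulVf c_neq0) -scalerA; apply: WZ.
Qed.

Lemma finite_dim0 : finite_dim (fun v => v = 0).
Proof. by exists [::] => _ -> W [W0 _ _]. Qed.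

Variable u : V -> V.

Lemma submodule_gen (S : V -> Prop) : submodule u (gen_submodule u S).
Proof.
split; first split.
- by move=> W [[W0 _ _] _].
- by move=> x y Sx Sy W HW SW; case: (HW) => -[_ WD _] _; apply: WD; [exact: Sx | exact: Sy].
- by move=> c x Sx W HW SW; case: (HW) => -[_ _ WZ] _; apply: WZ; exact: Sx.
- by move=> x Sx W HW SW; case: (HW) => _ Wu; apply: Wu; exact: Sx.
Qed.

Lemma sub_gen (S : V -> Prop) x : S x -> gen_submodule u S x.
Proof. by move=> Sx W _; apply. Qed.

Lemma submodule_chain_union (W : nat -> V -> Prop) :
  (forall n, submodule u (W n)) -> (forall n v, W n v -> W n.+1 v) ->
  submodule u (fun v => exists n, W n v).
Proof.
move=> HW WS; have Wmono := chain_mono WS.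
split; first split.
- by exists 0%N; case: (HW 0%N) => -[].
- move=> x y [m Wx] [n Wy]; exists (maxn m n); case: (HW (maxn m n)) => -[_ WD _] _.
  by apply: WD; [apply: Wmono Wx; exact: leq_maxl | apply: Wmono Wy; exact: leq_maxr].
- by move=> c x [n Wx]; exists n; case: (HW n) => -[_ _ WZ] _; apply: WZ.
- by move=> x [n Wx]; exists n; case: (HW n) => _ Wu; apply: Wu.
Qed.

End Spans.

Section Shift.
Variables (F : fieldType) (V : lmodType F) (u : {linear V -> V}) (lam : F).

Lemma shift_linear : linear (shift u lam).
Proof.
move=> c x y; rewrite /shift linearP scalerBr scalerDr scalerA mulrC -scalerA.
by rewrite addrACA opprD.
Qed.

HB.instance Definition _ := GRing.isLinear.Build F V V *:%R (shift u lam) shift_linear.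

Lemma submodule_shiftE (W : V -> Prop) : submodule (shift u lam) W <-> submodule u W.
Proof.
split=> -[sW Wstable]; split=> // x Wx; have [_ WD WZ] := sW.
- have -> : u x = shift u lam x + lam *: x by rewrite /shift subrK.
  by apply: WD; [apply: Wstable | apply: WZ].
- by rewrite /shift -scaleNr; apply: WD; [apply: Wstable | apply: WZ].
Qed.

Lemma gen_submodule_shiftE (S : V -> Prop) v :
  gen_submodule (shift u lam) S v <-> gen_submodule u S v.
Proof. by split=> Sv W /submodule_shiftE; apply: Sv. Qed.

Lemma has_good_stratification_shift :
  has_good_stratification (shift u lam) -> has_good_stratification u.
Proof.
move=> [D [lt [M [[wo Msub Mmono [nz Mgen] cover] quot nomax]]]].
exists D, lt, M; split=> //; split=> //.
- by move=> p; apply/submodule_shiftE.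
- split=> // p; have [x [Mx Hx]] := Mgen p; exists x; split=> // v.
  by rewrite Hx gen_submodule_shiftE.
Qed.

Lemma exists_notin_shift (W : V -> Prop) :
  ~ dominant_eigenvalue u lam -> finite_dim W -> exists y, ~ W (shift u lam y).
Proof.
move=> not_dom [s Ws]; apply: NNPP => none; apply: not_dom; exists s => x.
by apply: Ws; apply: NNPP => Wax; apply: none; exists x.
Qed.

End Shift.

Section SquareZero.
Variables (F : fieldType) (V : lmodType F) (a : {linear V -> V}).
Hypothesis a_sq0 : forall x, a (a x) = 0.

Lemma submodule0 : submodule a (fun v => v = 0).
Proof.
split; first split => //.
- by move=> x y -> ->; rewrite addr0.
- by move=> c x ->; rewrite scaler0.
- by move=> x ->; rewrite linear0.
Qed.

(* [add_cyclic W y] is W + F[t] y, as a^2 = 0. *)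
Definition add_cyclic (W : V -> Prop) (y : V) : V -> Prop :=
  fun v => exists w c d, W w /\ v = w + c *: y + d *: a y.

Definition add_im (W : V -> Prop) : V -> Prop :=
  fun v => exists w q, W w /\ v = w + a q.

Definition pure (W : V -> Prop) : Prop :=
  forall q, W (a q) -> exists2 w, W w & a q = a w.

(* Met both by any y with a y outside W and by a limit generator with a y = 0; it keeps
   W + F[t] y pure and the sum of the blocks direct. *)
Definition fresh (W : V -> Prop) (y : V) : Prop :=
  ~ add_im W y /\ (W (a y) -> a y = 0).

Lemma add_cyclicl (W : V -> Prop) y v : W v -> add_cyclic W y v.
Proof. by move=> Wv; exists v, 0, 0; rewrite !scale0r !addr0. Qed.

Lemma add_cyclicr (W : V -> Prop) y c d : W 0 -> add_cyclic W y (c *: y + d *: a y).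
Proof. by move=> W0; exists 0, c, d; rewrite add0r. Qed.

Lemma add_cyclic_self (W : V -> Prop) y : W 0 -> add_cyclic W y y.
Proof. by move=> W0; have := add_cyclicr y 1 0 W0; rewrite scale1r scale0r addr0. Qed.

Lemma add_cyclicS (W W' : V -> Prop) y v :
  (forall x, W x -> W' x) -> add_cyclic W y v -> add_cyclic W' y v.
Proof. by move=> WW' [w [c [d [/WW' W'w ->]]]]; exists w, c, d. Qed.

Lemma submodule_add_cyclic (W : V -> Prop) y : submodule a W -> submodule a (add_cyclic W y).
Proof.
move=> [[W0 WD WZ] Wa]; split; first split.
- exact: add_cyclicl.
- move=> _ _ [w [c [d [Ww ->]]]] [w' [c' [d' [Ww' ->]]]].
  exists (w + w'), (c + c'), (d + d'); split; first exact: WD.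
  by rewrite addrACA (addrACA w) !scalerDl.
- move=> k _ [w [c [d [Ww ->]]]]; exists (k *: w), (k * c), (k * d).
  by split; [exact: WZ | rewrite !scalerDr !scalerA].
- move=> _ [w [c [d [Ww ->]]]]; exists (a w), 0, c; split; first exact: Wa.
  by rewrite !linearD !linearZ /= a_sq0 scaler0 addr0 scale0r addr0.
Qed.

Lemma finite_dim_add_cyclic (W : V -> Prop) y : finite_dim W -> finite_dim (add_cyclic W y).
Proof.
move=> [s Ws]; exists [:: y, a y & s] => _ [w [c [d [Ww ->]]]].
have sS : subspace (Defs.span (fun x : V => x \in [:: y, a y & s])) by exact: subspace_span.
have [_ SD SZ] := sS; apply: (SD); first apply: (SD).
- apply: (Ws w Ww) => // x sx; apply: sub_span; by rewrite !inE sx !orbT.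
- by apply: SZ; apply: sub_span; rewrite !inE eqxx.
- by apply: SZ; apply: sub_span; rewrite !inE eqxx orbT.
Qed.

Lemma subspace_add_im (W : V -> Prop) : subspace W -> subspace (add_im W).
Proof.
move=> [W0 WD WZ]; split.
- by exists 0, 0; rewrite linear0 addr0.
- move=> _ _ [w [q [Ww ->]]] [w' [q' [Ww' ->]]]; exists (w + w'), (q + q').
  by split; [exact: WD | rewrite linearD addrACA].
- move=> c _ [w [q [Ww ->]]]; exists (c *: w), (c *: q).
  by split; [exact: WZ | rewrite linearZ scalerDr].
Qed.

Lemma fresh_of_notin (W : V -> Prop) y : submodule a W -> ~ W (a y) -> fresh W y.
Proof.
move=> HW Way; split=> [[w [q [Ww Ey]]]|/Way //]; apply: Way.
by rewrite Ey linearD a_sq0 addr0; apply: HW.2.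
Qed.

Lemma indep_of_notin (W : V -> Prop) y c d :
  submodule a W -> ~ W (a y) -> W (c *: y + d *: a y) -> c = 0 /\ d = 0.
Proof.
move=> HW Way Wv; have [sW _] := HW.
have c0 : c = 0.
  apply: (subspaceZ_eq0 sW _ Way).
  by have := HW.2 _ Wv; rewrite linearD !linearZ /= a_sq0 scaler0 addr0.
split=> //; apply: (subspaceZ_eq0 sW _ Way).
by move: Wv; rewrite c0 scale0r add0r.
Qed.

Lemma fresh_block (W : V -> Prop) y c d :
  submodule a W -> fresh W y -> W (c *: y + d *: a y) -> c = 0 /\ d *: a y = 0.
Proof.
move=> [sW _] [y_notin Way_eq0] Wv.
have c0 : c = 0.
  apply: (subspaceZ_eq0 (subspace_add_im sW) _ y_notin).
  by exists (c *: y + d *: a y), (- d *: y); rewrite linearZ /= scaleNr addrK.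
split=> //; have [/Way_eq0 ->|Way] := classic (W (a y)); first by rewrite scaler0.
suff -> : d = 0 by rewrite scale0r.
by apply: (subspaceZ_eq0 sW _ Way); move: Wv; rewrite c0 scale0r add0r.
Qed.

Lemma pure0 : pure (fun v => v = 0).
Proof. by move=> q ->; exists 0; rewrite ?linear0. Qed.

Lemma pure_add_cyclic (W : V -> Prop) y :
  submodule a W -> pure W -> ~ add_im W y -> pure (add_cyclic W y).
Proof.
move=> [sW _] pW y_notin q [w [c [d [Ww Eq]]]].
have c0 : c = 0.
  apply: (subspaceZ_eq0 (subspace_add_im sW) _ y_notin).
  exists (- w), (q - d *: y); split; first by rewrite -scaleN1r; case: sW => _ _; apply.
  by rewrite linearB linearZ /= Eq addrK addKr.
have /pW [w0 Ww0 Ew] : W (a (q - d *: y)).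
  by rewrite linearB linearZ /= Eq c0 scale0r addr0 addrK.
exists (w0 + d *: y); first by exists w0, d, 0; rewrite scale0r addr0.
by rewrite linearD linearZ /= -Ew linearB linearZ /= subrK.
Qed.

Lemma exists_fresh_cover (W : V -> Prop) x :
  submodule a W -> pure W -> (exists y0, ~ W (a y0)) ->
  exists y, fresh W y /\ add_cyclic W y x.
Proof.
move=> HW pW [y0 Wy0]; have [[W0 WD _] _] := HW.
have [[w [q [Ww ->]]] | x_notin] := classic (add_im W x).
  have [Waq|Waq] := classic (W (a q)).
    by exists y0; split; [exact: fresh_of_notin | apply: add_cyclicl; exact: WD].
  by exists q; split; [exact: fresh_of_notin | exists w, 0, 1; rewrite scale0r addr0 scale1r].
have [/pW [w Ww Eax]|Wax] := classic (W (a x)); last first.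
  by exists x; split; [exact: fresh_of_notin | exact: add_cyclic_self].
exists (x - w); split.
- split=> [[w' [q [Ww' Exw]]]|_]; last by rewrite linearB Eax subrr.
  apply: x_notin; exists (w' + w), q; split; first exact: WD.
  by rewrite addrAC -Exw subrK.
- by exists w, 1, 0; rewrite scale1r scale0r addr0 addrC subrK.
Qed.

End SquareZero.

Definition lexlt (p q : nat *l nat) : Prop := (p < q)%O.

Lemma well_order_lexlt : well_order lexlt.
Proof.
split.
- by move=> p; rewrite /lexlt ltxx.
- by move=> p q r; exact: lt_trans.
- by move=> p q; rewrite /lexlt; case: ltgtP; auto.
- apply: (wf_incl _ _ _ _ (wf_slexprod _ _ _ _ Wf_nat.lt_wf Wf_nat.lt_wf)).
  move=> [p1 p2] [q1 q2]; rewrite /lexlt ltEprodlexi /= => lt_pq.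
  have [/ssrnat.ltP lt1 | [-> /ssrnat.ltP lt2]] : (p1 < q1)%N \/ p1 = q1 /\ (p2 < q2)%N by lia.
  + exact: Relation_Operators.left_slex.
  + exact: Relation_Operators.right_slex.
Qed.

Definition is_limit (p : nat *l nat) : bool := (p.1 != 0)%N && (p.2 == 0)%N.

Lemma not_limit_of_min_succ p :
  is_minimum lexlt p \/ is_successor lexlt p -> ~~ is_limit p.
Proof.
case: p => -[|k] [|m] //= [p_min | [[j i] [lt_ji p_succ]]].
- by case: (p_min (0, 0)%N); rewrite /lexlt ltEprodlexi.
- case: (p_succ (j, i.+1)); move: lt_ji; rewrite /lexlt !ltEprodlexi /=; lia.
Qed.

Lemma lexlt_succr (p : nat *l nat) : lexlt p (p.1, p.2.+1).
Proof. by case: p => k m; rewrite /lexlt ltEprodlexi /=; lia. Qed.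

Section Construction.
Variables (F : fieldType) (V : lmodType F) (a : {linear V -> V}).
Hypothesis a_sq0 : forall x, a (a x) = 0.
Hypothesis rank_infinite : forall W : V -> Prop, finite_dim W -> exists y, ~ W (a y).
Variable e : nat -> V.

Definition position (n : nat) : nat *l nat := of_nat n.

(* Only at the limit position (k.+1, 0) may the quotient have dimension 1;
   that is where the basis vector [e k] is absorbed. *)
Definition good_choice n (W : V -> Prop) y : Prop :=
  fresh a W y /\
  (if is_limit (position n) then add_cyclic a W y (e (position n).1.-1) else ~ W (a y)).

Lemma exists_good_choice n (W : V -> Prop) :
  submodule a W -> finite_dim W -> pure a W -> exists y, good_choice n W y.
Proof.
move=> HW fW pW; have [y0 Wy0] := rank_infinite fW; rewrite /good_choice.
case: (is_limit _).
- exact: (exists_fresh_cover a_sq0 _ HW pW (ex_intro _ y0 Wy0)).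
- by exists y0; split; [exact: (fresh_of_notin a_sq0 HW Wy0) | exact: Wy0].
Qed.

Definition pick_good n (W : V -> Prop) : V := epsilon (inhabits 0) (good_choice n W).

Fixpoint stage n : V -> Prop :=
  if n is m.+1 then add_cyclic a (stage m) (pick_good m (stage m)) else (fun v => v = 0).

Definition generator n : V := pick_good n (stage n).

Lemma submodule_stage n : submodule a (stage n).
Proof. by elim: n => [|n IH] /=; [exact: submodule0 | exact: submodule_add_cyclic]. Qed.

Lemma finite_dim_stage n : finite_dim (stage n).
Proof. by elim: n => [|n IH] /=; [exact: finite_dim0 | exact: finite_dim_add_cyclic]. Qed.

Lemma pure_stage_good_choice n : pure a (stage n) /\ good_choice n (stage n) (generator n).
Proof.
have choose_good m : pure a (stage m) -> good_choice m (stage m) (generator m).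
  by move=> pm; apply: epsilon_spec; apply: exists_good_choice => //;
    [exact: submodule_stage | exact: finite_dim_stage].
elim: n => [|n [pn [[gn_fresh _] _]]].
  by split; [exact: pure0 | apply: choose_good; exact: pure0].
have pn1 : pure a (stage n.+1) by apply: pure_add_cyclic => //; exact: submodule_stage.
by split; last exact: choose_good.
Qed.

Lemma good_choice_generator n : good_choice n (stage n) (generator n).
Proof. exact: (pure_stage_good_choice n).2. Qed.

Lemma stage_mono m n v : (m <= n)%N -> stage m v -> stage n v.
Proof. by apply: chain_mono => k x; exact: add_cyclicl. Qed.

Fixpoint stage_on (A : pred nat) n : V -> Prop :=
  if n is m.+1 then (if A m then add_cyclic a (stage_on A m) (generator m) else stage_on A m)
  else (fun v => v = 0).

Lemma submodule_stage_on A n : submodule a (stage_on A n).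
Proof.
elim: n => [|n IH] /=; first exact: submodule0.
by case: (A n) => //; exact: submodule_add_cyclic.
Qed.

Lemma stage_on_step A n v : stage_on A n v -> stage_on A n.+1 v.
Proof. by rewrite /=; case: (A n) => //; exact: add_cyclicl. Qed.

Lemma stage_on_sub A n v : stage_on A n v -> stage n v.
Proof.
elim: n v => [|n IH] v //=; case: (A n); last by move=> /IH; exact: add_cyclicl.
exact: add_cyclicS.
Qed.

(* Directness of the sum of the blocks: a vector of stage [m.+1] that is a sum
   of blocks other than the [m]-th already lies in stage [m]. *)
Lemma stage_on_meet A m n v : ~~ A m -> stage_on A n v -> stage m.+1 v -> stage m v.
Proof.
move=> Am; elim: n v => [|n IH] v /=.
  by move=> -> _; case: (submodule_stage m) => -[].
case: ifP => [An|_]; last exact: IH.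
move=> [w [c [d [Ww ->]]]] Hv.
case: (ltngtP n m) => [lt_nm | lt_mn | eq_nm].
- by apply: (stage_mono lt_nm); exists w, c, d; split=> //; exact: stage_on_sub Ww.
- have Hb : stage n (w + c *: generator n + d *: a (generator n) - w).
    apply: subspaceB; first exact: (submodule_stage n).1.
    + exact: stage_mono lt_mn Hv.
    + exact: stage_on_sub Ww.
  rewrite -(addrA w) [X in stage n X]addrC addKr in Hb.
  have [c0 dag0] := fresh_block (submodule_stage n) (good_choice_generator n).1 Hb.
  by move: Hv; rewrite c0 scale0r addr0 dag0 addr0; exact: IH.
- by move: An; rewrite eq_nm (negbTE Am).
Qed.

Definition stratum (p : nat *l nat) : V -> Prop :=
  gen_submodule a (fun y => exists2 q, (q <= p)%O & y = generator (to_nat q)).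

Lemma stratum_generator p : stratum p (generator (to_nat p)).
Proof. by apply: sub_gen; exists p. Qed.

Lemma stratum_mono p q v : (p <= q)%O -> stratum p v -> stratum q v.
Proof.
move=> le_pq Hv; apply: Hv; first exact: submodule_gen.
by move=> _ [r le_rp ->]; apply: sub_gen; exists r => //; exact: le_trans le_pq.
Qed.

Lemma below_stratum_stage p c d :
  let y := generator (to_nat p) in
  below_sum lexlt stratum p (c *: y + d *: a y) -> stage (to_nat p) (c *: y + d *: a y).
Proof.
move=> y Hv; pose A : pred nat := fun m => (position m < p)%O.
have [n Hn] : exists n, stage_on A n (c *: y + d *: a y).
  have U : submodule a (fun v => exists n, stage_on A n v).
    apply: submodule_chain_union => [n | n v]; first exact: submodule_stage_on.
    exact: stage_on_step.
  apply: (Hv (fun v => exists n, stage_on A n v)); first exact: U.1.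
  move=> x [q [lt_qp Hx]]; apply: (Hx (fun v => exists n, stage_on A n v)); first exact: U.
  move=> _ [r le_rq ->]; exists (to_nat r).+1 => /=.
  rewrite /A /position cancel_of_to (le_lt_trans le_rq lt_qp) /=.
  by apply: add_cyclic_self; case: (submodule_stage_on A (to_nat r)) => -[].
apply: (stage_on_meet _ Hn); first by rewrite /A /position cancel_of_to ltxx.
by apply: add_cyclicr; case: (submodule_stage (to_nat p)) => -[].
Qed.

Lemma stage_span_strata n v : stage n v -> Defs.span (fun x => exists p, stratum p x) v.
Proof.
have [S0 SD SZ] : subspace (Defs.span (fun x => exists p, stratum p x)).
  exact: subspace_span.
elim: n v => [|n IH] v /=; first by move=> ->.
have gn_stratum : stratum (position n) (generator n).
  by rewrite -[in generator n](cancel_to_of n); exact: stratum_generator.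
move=> [w [c [d [Ww ->]]]]; apply: (SD); first apply: (SD).
- exact: IH.
- by apply: SZ; apply: sub_span; exists (position n).
- apply: SZ; apply: sub_span; exists (position n).
  by apply: (submodule_gen _ _).2.
Qed.

Lemma stratum_quotient_neq0 p : ~ below_sum lexlt stratum p (generator (to_nat p)).
Proof.
set y := generator (to_nat p) => Hb.
have Hy : stage (to_nat p) (1 *: y + 0 *: a y).
  by apply: below_stratum_stage; rewrite scale1r scale0r addr0.
have [/eqP one_eq0 _] := fresh_block (submodule_stage _) (good_choice_generator _).1 Hy.
by rewrite oner_eq0 in one_eq0.
Qed.

Lemma stratum_monogenous p v :
  stratum p v <->
  gen_submodule a (fun y => y = generator (to_nat p) \/ below_sum lexlt stratum p y) v.
Proof.
split=> Hv; apply: Hv; try exact: submodule_gen.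
- move=> _ [q le_qp ->]; apply: sub_gen.
  move: le_qp; rewrite le_eqVlt => /orP[/eqP -> | lt_qp]; first by left.
  by right; apply: sub_span; exists q; split=> //; exact: stratum_generator.
- move=> y [-> | Hy]; first exact: stratum_generator.
  apply: Hy; first exact: (submodule_gen _ _).1.
  by move=> x [q [lt_qp Hx]]; apply: stratum_mono Hx; exact: ltW.
Qed.

Hypothesis e_span : forall v, Defs.span (fun x => exists i, x = e i) v.

Lemma strata_cover v : Defs.span (fun x => exists p, stratum p x) v.
Proof.
apply: (e_span v); first exact: subspace_span.
move=> _ [i ->]; set n := to_nat (i.+1, 0%N).
apply: (stage_span_strata (n := n.+1)).
by have [_] := good_choice_generator n; rewrite /position cancel_of_to.
Qed.

Lemma stratification_strata : stratification a lexlt stratum.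
Proof.
split.
- exact: well_order_lexlt.
- by move=> p; exact: submodule_gen.
- by move=> p q lt_pq v; apply: stratum_mono; exact: ltW.
- split=> p; exists (generator (to_nat p)); split; try exact: stratum_generator.
  + exact: stratum_quotient_neq0.
  + by move=> v; exact: stratum_monogenous.
- exact: strata_cover.
Qed.

Lemma stratum_quot_dim_ge2 p : ~~ is_limit p -> quot_dim_ge2 lexlt stratum p.
Proof.
move=> p_not_limit; set y := generator (to_nat p).
exists y, (a y); split; first exact: stratum_generator.
  by apply: (submodule_gen _ _).2; exact: stratum_generator.
move=> c d /below_stratum_stage.
have [_] := good_choice_generator (to_nat p).
rewrite /position cancel_of_to (negbTE p_not_limit).
by move=> Way; exact: (indep_of_notin a_sq0 (submodule_stage _) Way).
Qed.

Lemma has_good_stratification_square_zero : has_good_stratification a.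
Proof.
exists (nat *l nat), lexlt, stratum; split.
- exact: stratification_strata.
- by move=> p /not_limit_of_min_succ; exact: stratum_quot_dim_ge2.
- by move=> p; exists (p.1, p.2.+1); exact: lexlt_succr.
Qed.

End Construction.

Theorem lemma5 (F : fieldType) (V : lmodType F) (u : {linear V -> V}) :
  countably_infinite_dim V ->
  (forall mu : F, ~ dominant_eigenvalue u mu) ->
  (exists lambda : F, forall x : V, shift u lambda (shift u lambda x) = 0) ->
  has_good_stratification u.
Proof.
move=> [e [_ e_span]] not_dom [lam shift_sq0].
apply: (has_good_stratification_shift (lam := lam)).
apply: (has_good_stratification_square_zero shift_sq0 _ e_span) => W.
exact: exists_notin_shift (not_dom lam).
Qed.
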